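(* Let $\eta:0\to X\xrightarrow{\iota}Y\xrightarrow{\pi}S\to0$ be a short exact sequence in $\operatorname{rep}(Q)$ and let $R$ be $R_d$ or $R_{d,\mathrm{str}}$. An element $(V,W)\in\operatorname{Gr}^R(\Phi(X))\times\operatorname{Gr}^R(\Phi(S))$ lies in the image of $\Psi$ if and only if the canonical map $\operatorname{Ext}^1_R(\Phi(S),\Phi(X))\to\operatorname{Ext}^1_R(W,\Phi(X)/V)$ (induced by the inclusion $W\hookrightarrow\Phi(S)$ and the projection $\Phi(X)\twoheadrightarrow\Phi(X)/V$) maps the class of $\Phi(\eta)$ to $0$.
   Context: $K=\mathbb{C}$; $Q$ a finite quiver, $\operatorname{rep}(Q)$ its finite-dimensional representations. For $d\geqslant1$, $Q_d$ has vertices $v(Q)\times\{1,\dots,d\}$, arrows $(i,r)\to(i,r+1)$ ($r\leqslant d-1$) and $(i,r)\to(j,r)$ for each arrow $i\to j$ of $Q$, $r\in\{1,\dots,d\}$. For $d\geqslant2$, $Q_{d,\mathrm{str}}$ has the same vertices and vertical arrows and arrows $(i,r)\to(j,r-1)$ for each arrow $i\to j$, $r\in\{2,\dots,d\}$. $R_d=KQ_d/I$, $R_{d,\mathrm{str}}=KQ_{d,\mathrm{str}}/I$ with $I$ the ideal identifying all paths with equal source and target. $\Phi:\operatorname{rep}(Q)\to\operatorname{Mod}(R)$ is the exact functor with $\Phi(X)_{(i,r)}=X_i$, identity on vertical arrows, $X_{i\to j}$ on arrows coming from $i\to j$, and $\Phi(f)_{(i,r)}=f_i$. $\operatorname{Gr}^R(T)$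 is the set of $R$-submodules of $T$. $\Psi:\operatorname{Gr}^R(\Phi(Y))\to\operatorname{Gr}^R(\Phi(X))\times\operatorname{Gr}^R(\Phi(S))$, $U\mapsto(\Phi(\iota)^{-1}(U),\Phi(\pi)(U))$. *)

(* Finite-dimensional representations of quivers are encoded
   with matrices acting on row vectors: x |-> x *m rmap M a. *)
From HB Require Import structures.
From mathcomp Require Import all_boot all_algebra.
Set Implicit Arguments. Unset Strict Implicit. Unset Printing Implicit Defensive.
Import GRing.Theory.
Local Open Scope ring_scope.

Record quiver := Quiver {
  qv : finType; qa : finType; qs : qa -> qv; qt : qa -> qv }.

Section Reps.
Variable K : fieldType.

Record rep (G : quiver) := Rep {
  rdim : qv G -> nat;
  rmap : forall a : qa G, 'M[K]_(rdim (qs a), rdim (qt a)) }.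

Definition homfam (G : quiver) (M N : rep G) := forall v : qv G, 'M[K]_(rdim M v, rdim N v).

Definition is_hom (G : quiver) (M N : rep G) (f : homfam M N) : Prop :=
  forall a : qa G, rmap M a *m f (qt a) = f (qs a) *m rmap N a.

Definition is_ses (G : quiver) (A B C : rep G) (i : homfam A B) (p : homfam B C) : Prop :=
  [/\ is_hom i, is_hom p &
      forall v, [/\ row_free (i v), (i v == kermx (p v))%MS & row_full (p v)]].

Fixpoint is_path (G : quiver) (v : qv G) (p : seq (qa G)) (w : qv G) : bool :=
  match p with
  | [::] => v == w
  | a :: p' => (qs a == v) && is_path (qt a) p' w
  end.

Fixpoint pathmx (G : quiver) (M : rep G) (v : qv G) (p : seq (qa G)) (w : qv G)
  : 'M[K]_(rdim M v, rdim M w) :=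
  match p with
  | [::] => conform_mx 0 (1%:M : 'M[K]_(rdim M v))
  | a :: p' => conform_mx 0 (rmap M a) *m pathmx M (qt a) p' w
  end.

(* modules over KG/I, where I identifies parallel paths with the same
   label sequence (lab sends each arrow of G to an arrow of Q or to None) *)
Definition is_rmod (G : quiver) (T : eqType) (lab : qa G -> option T) (M : rep G) : Prop :=
  forall v w (p q : seq (qa G)), is_path v p w -> is_path v q w ->
    pmap lab p = pmap lab q -> pathmx M v p w = pathmx M v q w.

(* submodules: families of subspaces (row spaces) stable under all arrows *)
Definition subfam (G : quiver) (M : rep G) := forall v : qv G, 'M[K]_(rdim M v).

Definition is_subrep (G : quiver) (M : rep G) (U : subfam M) : Prop :=
  forall a : qa G, (U (qs a) *m rmap M a <= U (qt a))%MS.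

(* Yoneda description: for an extension xi : 0 -> B --i--> E --p--> A -> 0,
   f : A' -> A and g : B -> B', the class Ext^1(f,g)[xi] = [g_* f^* xi]
   vanishes iff there is an extension theta : 0 -> B --j--> T --q--> A' -> 0
   (necessarily f^* xi) with a morphism of extensions theta -> xi which is
   (id, f) on the ends, and such that g_* theta splits, i.e. g extends
   along j to a morphism r : T -> B'. *)
Definition ext_image_zero (G : quiver) (Tl : eqType) (lab : qa G -> option Tl)
  (B E A A' B' : rep G) (i : homfam B E) (p : homfam E A)
  (f : homfam A' A) (g : homfam B B') : Prop :=
  exists (T : rep G) (j : homfam B T) (q : homfam T A') (t : homfam T E) (r : homfam T B'),
    [/\ is_rmod lab T, is_ses j q, is_hom t, is_hom r &
        forall v, [/\ j v *m t v = i v, t v *m p v = q v *m f v & j v *m r v = g v]].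

End Reps.

(* The quivers Q_d (str = false) and Q_{d,str} (str = true).
   Vertex (i, r) with r : 'I_d stands for (i, r+1). *)
Definition ordprev d (r : 'I_d) : 'I_d :=
  Ordinal (leq_ltn_trans (leq_pred r) (ltn_ord r)).

Definition Qd_arr (Q : quiver) (d : nat) (str : bool) : finType :=
  ({p : qv Q * 'I_d | (p.2.+1 < d)%N} + {p : qa Q * 'I_d | str ==> (0 < p.2)%N})%type.

Definition Qd_src (Q : quiver) d str (a : Qd_arr Q d str) : qv Q * 'I_d :=
  match a with
  | inl p => val p
  | inr p => (qs (val p).1, (val p).2)
  end.

Definition Qd_tgt (Q : quiver) d str (a : Qd_arr Q d str) : qv Q * 'I_d :=
  match a with
  | inl p => ((val p).1, Ordinal (valP p))
  | inr p => (qt (val p).1, if str then ordprev (val p).2 else (val p).2)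
  end.

Definition Qd (Q : quiver) d str : quiver :=
  @Quiver (qv Q * 'I_d)%type (Qd_arr Q d str) (@Qd_src Q d str) (@Qd_tgt Q d str).

Definition Qd_lab (Q : quiver) d str (a : qa (Qd Q d str)) : option (qa Q) :=
  match a with inl _ => None | inr p => Some (val p).1 end.

Section Phi.
Variables (K : fieldType) (Q : quiver) (d : nat) (str : bool).

Definition Phi_map (X : rep K Q) (a : qa (Qd Q d str))
  : 'M[K]_(rdim X (qs a).1, rdim X (qt a).1) :=
  match a as a0 return 'M[K]_(rdim X (@qs (Qd Q d str) a0).1, rdim X (@qt (Qd Q d str) a0).1) with
  | inl p => 1%:M
  | inr p => rmap X (val p).1
  end.

Definition Phi (X : rep K Q) : rep K (Qd Q d str) :=
  @Rep K (Qd Q d str) (fun v => rdim X v.1) (Phi_map X).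

Definition Phi_hom (X Y : rep K Q) (f : homfam X Y) : homfam (Phi X) (Phi Y) :=
  fun v => f v.1.

(* U |-> (Phi(iota)^{-1}(U), Phi(pi)(U)) is (V, W) for some submodule U *)
Definition in_image_Psi (X Y S : rep K Q) (iota : homfam X Y) (pi : homfam Y S)
  (V : subfam (Phi X)) (W : subfam (Phi S)) : Prop :=
  exists U : subfam (Phi Y), is_subrep U /\
    forall v, (kermx (Phi_hom iota v *m cokermx (U v)) == V v)%MS /\
              (U v *m Phi_hom pi v == W v)%MS.
End Phi.

From HB Require Import structures.
From mathcomp Require Import all_boot all_algebra.
From mathcomp Require Import reals complex.
Import GRing.Theory.
Local Open Scope ring_scope.
Set Implicit Arguments. Unset Strict Implicit. Unset Printing Implicit Defensive.

(* A submodule U of Phi(Y) with Phi(iota)^-1(U) = V and Phi(pi)(U) = W exists iff the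
   pullback T = Phi(pi)^-1(W) of Phi(eta) along W -> Phi(S) carries a map r : T -> Phi(X)/V
   extending the quotient map q, i.e. iff the pushout of that pullback along q splits.
   Given U, we have T = Phi(iota)(Phi X) + U, and r is q on the first summand and 0 on U;
   this is well defined precisely because Phi(iota)^-1(U) = V. Conversely, for any
   extension T mapping to Phi(eta) and any such r, the map t : T -> Phi(Y) is injective
   and U := t(ker r) works. Everything is vertexwise linear algebra over an arbitrary quiver
   with relations: Phi only contributes that Phi(eta) is exact and that Phi X, Phi Y, Phi S
   satisfy the relations of R, hence so do their submodules and quotients. *)

Section LinearAlgebra.
Variable F : fieldType.

Lemma ker_mulmxKpV m n k (M : 'M[F]_(m, n)) (C : 'M_(m, k)) :
  (kermx M <= kermx C)%MS -> M *m pinvmx M *m C = C.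
Proof.
move=> sMC; have /sub_kermxP : (1%:M - M *m pinvmx M) *m M = 0.
  by rewrite mulmxBl mul1mx mulmxKpV ?subrr.
move=> /submx_trans/(_ sMC)/sub_kermxP.
by rewrite mulmxBl mul1mx => /eqP; rewrite subr_eq0 => /eqP.
Qed.

Section PullbackMx.
Variables (m n k l s : nat) (i : 'M[F]_(m, n)) (p : 'M[F]_(n, k)) (w : 'M[F]_(l, k)).
Variable b : 'M[F]_(s, n).
Hypotheses (i_free : row_free i) (i_ker : (i :=: kermx p)%MS).
Hypotheses (p_full : row_full p) (w_free : row_free w).
Hypotheses (b_free : row_free b) (bE : (b :=: kermx (p *m cokermx w))%MS).

Lemma sub_preim r (h : 'M_(r, n)) : (h <= b)%MS = (h *m p <= w)%MS.
Proof. by rewrite bE sub_kermx mulmxA -submxE. Qed.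

Lemma preim_im_sub : (b *m p <= w)%MS. Proof. by rewrite -sub_preim. Qed.

Lemma i_sub_preim : (i <= b)%MS.
Proof.
have ip0 : i *m p = 0 by apply/sub_kermxP; rewrite -i_ker.
by rewrite sub_preim ip0 sub0mx.
Qed.

Definition pb_inj := i *m pinvmx b.
Definition pb_proj := b *m p *m pinvmx w.

Lemma pb_injK : pb_inj *m b = i. Proof. exact: mulmxKpV i_sub_preim. Qed.

Lemma pb_projK : pb_proj *m w = b *m p. Proof. exact: mulmxKpV preim_im_sub. Qed.

Lemma pb_inj_free : row_free pb_inj.
Proof.
by case/row_freeP: i_free => B iB; apply/row_freeP; exists (b *m B); rewrite mulmxA pb_injK.
Qed.

Lemma pb_proj_full : row_full pb_proj.
Proof.
have w_sub : (w <= b *m p)%MS.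
  have /submxP[h wE] : (w <= p)%MS by exact: submx_full.
  have /submxP[E hE] : (h <= b)%MS by rewrite sub_preim -wE.
  by apply/submxP; exists E; rewrite mulmxA -hE.
by rewrite -sub1mx -(submxMfree _ _ w_free) mul1mx pb_projK.
Qed.

Lemma pb_inj_ker : (pb_inj :=: kermx pb_proj)%MS.
Proof.
apply/eqmxP/andP; split.
  have ip0 : i *m p = 0 by apply/sub_kermxP; rewrite -i_ker.
  by rewrite sub_kermx /pb_proj mulmxA (mulmxA pb_inj b) pb_injK ip0 !mul0mx.
set z := kermx pb_proj; have : (z *m b <= kermx p)%MS.
  by apply/sub_kermxP; rewrite -mulmxA -pb_projK mulmxA mulmx_ker mul0mx.
rewrite -i_ker => /submxP[D zD].
suff -> : z = D *m pb_inj by exact: submxMl.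
by apply: (row_free_inj b_free); rewrite /= zD -mulmxA pb_injK.
Qed.

Section Splitting.
Variables (o : nat) (U : 'M[F]_n) (q : 'M[F]_(m, o)).
Hypotheses (preim_sub : (kermx (i *m cokermx U) <= kermx q)%MS) (w_sub : (w <= U *m p)%MS).

Definition zext := pinvmx (col_mx i U) *m col_mx q 0.

Lemma zext_col : col_mx i U *m zext = col_mx q 0.
Proof.
rewrite mulmxA ker_mulmxKpV //; set z := kermx _.
have /eqP := mulmx_ker (col_mx i U); rewrite -/z -[z]hsubmxK mul_row_col addr_eq0.
move=> /eqP zi; apply/sub_kermxP; rewrite mul_row_col mulmx0 addr0.
apply/sub_kermxP/(submx_trans _ preim_sub).
by rewrite sub_kermx mulmxA zi mulNmx -mulmxA mulmx_coker mulmx0 oppr0.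
Qed.

Lemma zextK : i *m zext = q. Proof. by have := zext_col; rewrite mul_col_mx => /eq_col_mx[]. Qed.

Lemma zext0 : U *m zext = 0. Proof. by have := zext_col; rewrite mul_col_mx => /eq_col_mx[]. Qed.

Lemma preim_sub_adds : (b <= i + U)%MS.
Proof.
have /submxP[Z pZ] := submx_trans preim_im_sub w_sub.
rewrite -[b](subrK (Z *m U)) addmx_sub_adds ?submxMl //.
by rewrite i_ker sub_kermx mulmxBl pZ mulmxA subrr.
Qed.

End Splitting.
End PullbackMx.

Section ExtensionMorphismMx.
Variables (m n k l s o : nat) (i : 'M[F]_(m, n)) (p : 'M[F]_(n, k)) (w : 'M[F]_(l, k)).
Variables (q : 'M[F]_(m, o)) (j : 'M[F]_(m, s)) (q' : 'M[F]_(s, l)) (t : 'M[F]_(s, n)).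
Variable r : 'M[F]_(s, o).
Hypotheses (j_ker : (j :=: kermx q')%MS) (jt : j *m t = i) (tp : t *m p = q' *m w).
Hypothesis jr : j *m r = q.

Lemma ext_morph_free : row_free i -> row_free w -> row_free t.
Proof.
move=> i_free w_free; rewrite -kermx_eq0; set z := kermx t.
have zt : z *m t = 0 := mulmx_ker t.
have /submxP[D zD] : (z <= j)%MS.
  by rewrite j_ker sub_kermx -(mulmx_free_eq0 _ w_free) -mulmxA -tp mulmxA zt mul0mx.
have /eqP : D *m i = 0 by rewrite -jt mulmxA -zD zt.
by rewrite mulmx_free_eq0 // => /eqP D0; rewrite zD D0 mul0mx.
Qed.

Definition img_ker := <<kermx r *m t>>%MS.

Lemma img_ker_preim : row_free t -> (kermx (i *m cokermx img_ker) :=: kermx q)%MS.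
Proof.
move=> t_free; apply/eqmxP/andP; split.
  set z := kermx _; have : (z *m i <= img_ker)%MS by rewrite submxE -mulmxA mulmx_ker.
  rewrite genmxE -jt mulmxA => /submxP[D zD].
  have {}zD : z *m j = D *m kermx r by apply: (row_free_inj t_free); rewrite /= zD mulmxA.
  by apply/sub_kermxP; rewrite -jr mulmxA zD -mulmxA mulmx_ker mulmx0.
set z := kermx q; rewrite sub_kermx mulmxA -submxE genmxE -jt mulmxA submxMr //.
by apply/sub_kermxP; rewrite -mulmxA jr mulmx_ker.
Qed.

Lemma img_ker_im : row_full q -> row_full q' -> (img_ker *m p :=: w)%MS.
Proof.
move=> q_full q'_full; apply/eqmxP/andP.
rewrite /img_ker !(eqmxMr _ (genmxE _)) -mulmxA tp mulmxA; split; first exact: submxMl.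
rewrite -{1}[w]mul1mx submxMr //; set e := 1%:M - r *m pinvmx q *m j.
have qK : pinvmx q *m q = 1%:M by rewrite -[pinvmx q]mul1mx mulmxKpV ?submx_full.
have jq'0 : j *m q' = 0 by apply/sub_kermxP; rewrite j_ker.
have er : e *m r = 0.
  by rewrite mulmxBl mul1mx -(mulmxA (r *m _)) jr -(mulmxA r) qK mulmx1 subrr.
have eq' : e *m q' = q' by rewrite mulmxBl mul1mx -(mulmxA (r *m _)) jq'0 mulmx0 subr0.
apply: submx_trans (submx_full _ q'_full) _.
by rewrite -{1}eq' submxMr //; apply/sub_kermxP.
Qed.

End ExtensionMorphismMx.

End LinearAlgebra.

Section Representations.
Variables (K : fieldType) (G : quiver).
Implicit Types (M N : rep K G).

Lemma pathmx_hom M N (f : homfam M N) : is_hom f ->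
  forall p v w, is_path v p w -> pathmx M v p w *m f w = f v *m pathmx N v p w.
Proof.
move=> f_hom; elim=> [|a p IHp] v w /=.
  by move=> /eqP vw; subst w; rewrite !conform_mx_id mul1mx mulmx1.
case/andP=> /eqP av ap; subst v.
by rewrite !conform_mx_id -mulmxA IHp // !mulmxA f_hom.
Qed.

Section Relations.
Variables (L : eqType) (lab : qa G -> option L).

Lemma rmod_of_hom_free M N (f : homfam M N) :
  is_hom f -> (forall v, row_free (f v)) -> is_rmod lab N -> is_rmod lab M.
Proof.
move=> f_hom f_free N_rmod v w p p' pP p'P lab_pp'; apply: (row_free_inj (f_free w)).
by rewrite /= !pathmx_hom // (N_rmod v w p p' pP p'P lab_pp').
Qed.

Lemma rmod_of_hom_full M N (f : homfam M N) :
  is_hom f -> (forall v, row_full (f v)) -> is_rmod lab M -> is_rmod lab N.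
Proof.
move=> f_hom f_full M_rmod v w p p' pP p'P lab_pp'; apply: (row_full_inj (f_full v)).
by rewrite /= -!pathmx_hom // (M_rmod v w p p' pP p'P lab_pp').
Qed.

End Relations.

Lemma hom_comp (L M N : rep K G) (f : homfam L M) (g : homfam M N) :
  is_hom f -> is_hom g -> is_hom ((fun v => f v *m g v) : homfam L N).
Proof. by move=> f_hom g_hom a; rewrite mulmxA f_hom -!mulmxA g_hom. Qed.

Lemma hom_cancel_free (L M N : rep K G) (f : homfam L M) (g : homfam M N) :
  is_hom g -> (forall v, row_free (g v)) ->
  is_hom ((fun v => f v *m g v) : homfam L N) -> is_hom f.
Proof.
move=> g_hom g_free fg_hom a; apply: (row_free_inj (g_free (qt a))).
by rewrite /= -mulmxA fg_hom -!mulmxA g_hom.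
Qed.

Section Subrep.
Variables (M : rep K G) (U : subfam M).

Definition subrep : rep K G := @Rep K G (fun v => \rank (U v))
  (fun a => row_base (U (qs a)) *m rmap M a *m pinvmx (row_base (U (qt a)))).

Definition subrep_incl : homfam subrep M := fun v => row_base (U v).

Lemma subrep_incl_hom : is_subrep U -> is_hom subrep_incl.
Proof.
move=> U_sub a; rewrite /= mulmxKpV //.
by rewrite !eq_row_base (eqmxMr _ (eq_row_base _)) U_sub.
Qed.

Lemma subrep_incl_free v : row_free (subrep_incl v).
Proof. exact: row_base_free. Qed.

Lemma subrep_inclE v : (subrep_incl v :=: U v)%MS.
Proof. exact: eq_row_base. Qed.

Definition quotrep : rep K G := @Rep K G (fun v => \rank (cokermx (U v)))
  (fun a => pinvmx (col_base (cokermx (U (qs a)))) *m rmap M a *m col_base (cokermx (U (qt a)))).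

Definition quot_proj : homfam M quotrep := fun v => col_base (cokermx (U v)).

Lemma sub_kermx_quot_proj v m (z : 'M_(m, rdim M v)) :
  (z <= kermx (quot_proj v))%MS = (z <= U v)%MS.
Proof.
rewrite sub_kermx submxE -(mulmx_free_eq0 _ (row_base_free (cokermx (U v)))).
by rewrite -mulmxA mulmx_base.
Qed.

Lemma kermx_quot_proj v : (kermx (quot_proj v) :=: U v)%MS.
Proof.
apply/eqmxP/andP; split; first by rewrite -sub_kermx_quot_proj.
by rewrite sub_kermx_quot_proj.
Qed.

Lemma quot_proj_full v : row_full (quot_proj v). Proof. exact: col_base_full. Qed.

Lemma quot_proj_hom : is_subrep U -> is_hom quot_proj.
Proof.
move=> U_sub a; rewrite /= -(mulmxA (pinvmx _)) (mulmxA (quot_proj _)) ker_mulmxKpV //.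
by rewrite sub_kermx mulmxA -sub_kermx sub_kermx_quot_proj (eqmxMr _ (kermx_quot_proj _)) U_sub.
Qed.

End Subrep.

Lemma img_ker_subrep (T M N : rep K G) (t : homfam T M) (r : homfam T N) :
  is_hom t -> is_hom r -> is_subrep (fun v => img_ker (t v) (r v)).
Proof.
move=> t_hom r_hom a; rewrite /img_ker (eqmxMr _ (genmxE _)) genmxE -mulmxA -t_hom mulmxA.
by apply/submxMr/sub_kermxP; rewrite -mulmxA r_hom mulmxA mulmx_ker mul0mx.
Qed.

End Representations.

Section Extensions.
Variables (K : fieldType) (G : quiver) (L : eqType) (lab : qa G -> option L).

Section Pullback.
Variables (A B C W' : rep K G) (i : homfam A B) (p : homfam B C) (w : homfam W' C).
Hypotheses (i_hom : is_hom i) (p_hom : is_hom p) (w_hom : is_hom w).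
Hypotheses (i_free : forall v, row_free (i v)) (i_ker : forall v, (i v :=: kermx (p v))%MS).
Hypotheses (p_full : forall v, row_full (p v)) (w_free : forall v, row_free (w v)).

Definition preim : subfam B := fun v => kermx (p v *m cokermx (w v)).

Lemma preim_subrep : is_subrep preim.
Proof.
move=> a; rewrite /preim; set z := kermx _.
have zw : (z *m p (qs a) <= w (qs a))%MS by rewrite submxE -mulmxA mulmx_ker.
rewrite sub_kermx mulmxA -submxE -mulmxA p_hom mulmxA.
by apply: submx_trans (submxMr _ zw) _; rewrite -w_hom submxMl.
Qed.

Definition pullback := subrep preim.

Let incl := subrep_incl preim.
Let incl_hom : is_hom incl := subrep_incl_hom preim_subrep.
Let incl_free v : row_free (incl v) := subrep_incl_free preim v.
Let inclE v : (incl v :=: preim v)%MS := subrep_inclE preim v.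

Definition pb_in : homfam A pullback := fun v => pb_inj (i v) (incl v).

Definition pb_out : homfam pullback W' := fun v => pb_proj (p v) (w v) (incl v).

Lemma pullback_ses : is_ses pb_in pb_out.
Proof.
split=> [||v].
- apply: (hom_cancel_free incl_hom incl_free) => a.
  by rewrite /= !(pb_injK (i_ker _) (inclE _)); exact: i_hom.
- apply: (hom_cancel_free w_hom w_free) => a.
  by rewrite /= !(pb_projK (inclE _)); exact: (hom_comp incl_hom p_hom).
- split; first exact: pb_inj_free (i_free v) (i_ker v) (inclE v).
    by apply/eqmxP; exact: pb_inj_ker (i_ker v) (incl_free v) (inclE v).
  exact: pb_proj_full (p_full v) (w_free v) (inclE v).
Qed.

Section Splitting.
Variables (Xq : rep K G) (q : homfam A Xq) (U : subfam B).
Hypotheses (q_hom : is_hom q) (U_sub : is_subrep U).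
Hypothesis preim_sub : forall v, (kermx (i v *m cokermx (U v)) <= kermx (q v))%MS.
Hypothesis w_sub : forall v, (w v <= U v *m p v)%MS.

Definition pb_split : homfam pullback Xq := fun v => incl v *m zext (i v) (U v) (q v).

Lemma pb_splitK v : pb_in v *m pb_split v = q v.
Proof. by rewrite mulmxA (pb_injK (i_ker v) (inclE v)) zextK. Qed.

Lemma pb_split_hom : is_hom pb_split.
Proof.
move=> a; rewrite /= mulmxA (incl_hom a) -!(mulmxA (incl _)).
have /sub_addsmxP[[zi zU] /= ->] := preim_sub_adds (i_ker _) (inclE (qs a)) (w_sub _).
have iE : i (qs a) *m (rmap B a *m zext (i (qt a)) (U (qt a)) (q (qt a)))
        = i (qs a) *m (zext (i (qs a)) (U (qs a)) (q (qs a)) *m rmap Xq a).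
  by rewrite mulmxA -i_hom -mulmxA !zextK // q_hom (mulmxA (i _)) zextK.
have UE : U (qs a) *m (rmap B a *m zext (i (qt a)) (U (qt a)) (q (qt a)))
        = U (qs a) *m (zext (i (qs a)) (U (qs a)) (q (qs a)) *m rmap Xq a).
  have /submxP[D UD] := U_sub a.
  rewrite (mulmxA _ (rmap B a)) UD -(mulmxA D) (mulmxA _ (zext _ _ _)).
  by rewrite (zext0 (preim_sub (qt a))) (zext0 (preim_sub (qs a))) mulmx0 mul0mx.
by rewrite !mulmxDl -!(mulmxA zi) -!(mulmxA zU) iE UE.
Qed.
End Splitting.

Lemma ext_image_zero_of_subrep (Xq : rep K G) (q : homfam A Xq) (U : subfam B) :
  is_rmod lab B -> is_hom q -> is_subrep U ->
  (forall v, (kermx (i v *m cokermx (U v)) <= kermx (q v))%MS) ->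
  (forall v, (w v <= U v *m p v)%MS) ->
  ext_image_zero lab i p w q.
Proof.
move=> B_rmod q_hom U_sub preim_sub w_sub.
exists pullback, pb_in, pb_out, incl, (pb_split q U); split.
- exact: rmod_of_hom_free incl_hom incl_free B_rmod.
- exact: pullback_ses.
- exact: incl_hom.
- exact: pb_split_hom.
- move=> v; split; first exact: pb_injK (i_ker v) (inclE v).
    by rewrite (pb_projK (inclE v)).
  exact: pb_splitK.
Qed.

End Pullback.

Lemma subrep_of_ext_image_zero (A B C W' Xq : rep K G) (i : homfam A B) (p : homfam B C)
    (w : homfam W' C) (q : homfam A Xq) :
  (forall v, row_free (i v)) -> (forall v, row_free (w v)) -> (forall v, row_full (q v)) ->
  ext_image_zero lab i p w q ->
  exists U : subfam B, is_subrep U /\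
    forall v, (kermx (i v *m cokermx (U v)) :=: kermx (q v))%MS /\ (U v *m p v :=: w v)%MS.
Proof.
move=> i_free w_free q_full [T [j [q' [t [r [_ [_ _ jq'] t_hom r_hom jtr]]]]]].
exists (fun v => img_ker (t v) (r v)); split; first exact: img_ker_subrep.
move=> v; have [_ /eqmxP j_ker q'_full] := jq' v; have [jt tp jr] := jtr v.
have t_free := ext_morph_free j_ker jt tp (i_free v) (w_free v).
by split; [exact: img_ker_preim jt jr t_free | exact: img_ker_im j_ker tp jr (q_full v) q'_full].
Qed.

Section Lift.
Variables (A B C : rep K G) (i : homfam A B) (p : homfam B C).
Variables (V : subfam A) (W : subfam C).

Definition has_subrep_lift := exists U : subfam B, is_subrep U /\
  forall v, (kermx (i v *m cokermx (U v)) == V v)%MS /\ (U v *m p v == W v)%MS.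

(* The image of the class of (i, p) in Ext^1(W, A/V) vanishes, for whichever modules W' and
   Xq are used to realise W and A/V. *)
Definition ext_restr_zero :=
  forall (W' : rep K G) (w : homfam W' C) (Xq : rep K G) (q : homfam A Xq),
    is_rmod lab W' -> is_hom w -> (forall v, row_free (w v) /\ (w v == W v)%MS) ->
    is_rmod lab Xq -> is_hom q -> (forall v, row_full (q v) /\ (kermx (q v) == V v)%MS) ->
    ext_image_zero lab i p w q.

Theorem has_subrep_liftP :
  is_ses i p -> is_rmod lab A -> is_rmod lab B -> is_rmod lab C ->
  is_subrep V -> is_subrep W ->
  has_subrep_lift <-> ext_restr_zero.
Proof.
case=> i_hom p_hom ip_exact A_rmod B_rmod C_rmod V_sub W_sub.
have i_free v : row_free (i v) by case: (ip_exact v).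
split.
- case=> U [U_sub UVW] W' w Xq q _ w_hom w_W _ q_hom q_V.
  have i_ker v : (i v :=: kermx (p v))%MS by case: (ip_exact v) => _ /eqmxP.
  have p_full v : row_full (p v) by case: (ip_exact v).
  have w_free v : row_free (w v) by case: (w_W v).
  apply: (ext_image_zero_of_subrep i_hom p_hom w_hom i_free i_ker p_full w_free B_rmod q_hom U_sub).
  + move=> v; have [_ /eqmxP qV] := q_V v; have [/eqmxP UV _] := UVW v.
    by rewrite qV UV.
  + move=> v; have [_ /eqmxP wW] := w_W v; have [_ /eqmxP UW] := UVW v.
    by rewrite wW UW.
- move=> ext_zero.
  have W_hom := subrep_incl_hom W_sub; have q_hom := quot_proj_hom V_sub.
  have W_rmod := rmod_of_hom_free W_hom (subrep_incl_free W) C_rmod.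
  have Xq_rmod := rmod_of_hom_full q_hom (quot_proj_full V) A_rmod.
  have := ext_zero _ _ _ _ W_rmod W_hom
    (fun v => conj (subrep_incl_free W v) (introT eqmxP (subrep_inclE W v))) Xq_rmod q_hom
    (fun v => conj (quot_proj_full V v) (introT eqmxP (kermx_quot_proj V v))).
  case/(subrep_of_ext_image_zero i_free (subrep_incl_free W) (quot_proj_full V)).
  move=> U [U_sub UVW].
  exists U; split=> // v; have [kU pU] := UVW v.
  split; apply/eqmxP; first exact: eqmx_trans kU (kermx_quot_proj V v).
  exact: eqmx_trans pU (subrep_inclE W v).
Qed.
End Lift.
End Extensions.

Section PhiFunctor.
Variables (K : fieldType) (Q : quiver) (d : nat) (str : bool).

Lemma Phi_pathmx (X : rep K Q) v p w : is_path v p w ->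
  pathmx (Phi d str X) v p w = pathmx X v.1 (pmap (@Qd_lab Q d str) p) w.1.
Proof.
elim: p v => [|a p IHp] v /=; first by move=> /eqP->.
case/andP=> /eqP av ap; subst v; rewrite IHp //.
by case: a ap => a ap; rewrite //= !conform_mx_id mul1mx.
Qed.

Lemma Phi_rmod (X : rep K Q) : is_rmod (@Qd_lab Q d str) (Phi d str X).
Proof. by move=> v w p p' pP p'P lab_pp'; rewrite !Phi_pathmx // lab_pp'. Qed.

Lemma Phi_hom_hom (X Y : rep K Q) (f : homfam X Y) :
  is_hom f -> is_hom (Phi_hom (d := d) (str := str) f).
Proof. by move=> f_hom [a|a] /=; [rewrite mul1mx mulmx1 | exact: f_hom]. Qed.

Lemma Phi_ses (X Y S : rep K Q) (iota : homfam X Y) (pi : homfam Y S) :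
  is_ses iota pi -> is_ses (Phi_hom (d := d) (str := str) iota) (Phi_hom pi).
Proof.
case=> iota_hom pi_hom ip_exact.
by split; [exact: Phi_hom_hom | exact: Phi_hom_hom | move=> v; exact: ip_exact].
Qed.

End PhiFunctor.

Theorem lemma3p4 (R : realType) (Q : quiver) (d : nat) (str : bool)
  (hd : (1 + str <= d)%N)
  (X Y S : rep R[i] Q) (iota : homfam X Y) (pi : homfam Y S)
  (eta : is_ses iota pi)
  (V : subfam (Phi d str X)) (W : subfam (Phi d str S))
  (hV : is_subrep V) (hW : is_subrep W) :
  in_image_Psi iota pi V W <->
  (forall (W' : rep R[i] (Qd Q d str)) (w : homfam W' (Phi d str S))
          (Xq : rep R[i] (Qd Q d str)) (q : homfam (Phi d str X) Xq),
     is_rmod (@Qd_lab Q d str) W' -> is_hom w ->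
     (forall v, row_free (w v) /\ (w v == W v)%MS) ->
     is_rmod (@Qd_lab Q d str) Xq -> is_hom q ->
     (forall v, row_full (q v) /\ (kermx (q v) == V v)%MS) ->
     ext_image_zero (@Qd_lab Q d str) (Phi_hom iota : homfam (Phi d str X) (Phi d str Y)) (Phi_hom pi : homfam (Phi d str Y) (Phi d str S)) w q).
Proof.
exact (has_subrep_liftP (Phi_ses d str eta) (Phi_rmod X) (Phi_rmod Y) (Phi_rmod S) hV hW).
Qed.
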